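(* For every integer $r\ge 3$ and every integer $s$ with $3\le s\le 2r$, there exists an $r$-uniform linear hypertree $H$ with $\Delta(H)=s$ and $\hat{n}(H)=0$.
   Context: All hypergraphs are finite, simple (if $e\subseteq e'$ are hyperedges then $e=e'$) and have no loops; isolated vertices are allowed. $H$ is $r$-uniform if every hyperedge has exactly $r$ vertices. The degree of a vertex is the number of hyperedges containing it, and $\Delta(H)$ is the maximum degree. $H$ is linear if $|e\cap e'|\le 1$ for all distinct hyperedges $e,e'$. $H$ is a hypertree if there is a tree $T$ with $V(T)=V(H)$ such that for every hyperedge $e$ the induced subgraph $T[e]$ is connected. A digraph has arcs $(u,v)$ with no pair of opposite arcs; it is acyclic if it has no directed cycle. For a digraph $D$, $N^-_D(v)=\{u:(u,v)\in A(D)\}$ and $N^+_D(v)=\{u:(v,u)\in A(D)\}$. The niche hypergraph $NH(D)$ of an acyclic digraph $D$ has vertex set $V(D)$ and hyperedge set $\{e\subseteq V(D): |e|\ge 2 \text{ and } e=N^-_D(v) \text{ or } e=N^+_D(v) \text{ for some } v\in V(D)\}$. The niche number $\hat n(H)$ is the minimum $k\ge 0$ such that $H$ together with $k$ additional isolated vertices is the niche hypergraph of an acyclic digraph ($\infty$ if no such $k$ exists). *)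

From mathcomp Require Import all_boot.
Set Implicit Arguments. Unset Strict Implicit. Unset Printing Implicit Defensive.

(* A hypergraph on the finite vertex type T is given by its set of hyperedges
   E : {set {set T}}.  Vertices of T outside every edge are isolated vertices. *)
Section Hyper.
Variable T : finType.
Implicit Types (E : {set {set T}}).

Definition is_hypergraph E : Prop :=
  (forall e e', e \in E -> e' \in E -> e \subset e' -> e = e') /\
  (forall e, e \in E -> 2 <= #|e|).

Definition uniform (r : nat) E : Prop := forall e, e \in E -> #|e| = r.

Definition linear_hg E : Prop :=
  forall e e', e \in E -> e' \in E -> e != e' -> #|e :&: e'| <= 1.

Definition degree E (v : T) : nat := #|[set e in E | v \in e]|.

Definition max_degree E : nat := \max_(v : T) degree E v.

(* a (spanning) tree on T: symmetric irreflexive relation that is connected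
   and has exactly #|T| - 1 (unordered) edges *)
Definition is_tree (t : rel T) : Prop :=
  symmetric t /\ irreflexive t /\ (forall x y, connect t x y) /\
  #|[set p : T * T | t p.1 p.2]| = 2 * (#|T| - 1).

Definition induced_connected (t : rel T) (e : {set T}) : Prop :=
  forall x y, x \in e -> y \in e ->
    connect (fun a b => [&& t a b, a \in e & b \in e]) x y.

Definition hypertree E : Prop :=
  exists t : rel T, is_tree t /\ forall e, e \in E -> induced_connected t e.

(* digraphs: arc relation D : rel T; acyclic = no directed cycle
   (this also rules out loops and pairs of opposite arcs) *)
Definition acyclic_digraph (D : rel T) : Prop :=
  forall x y, D x y -> ~~ connect D y x.

Definition in_nbhd (D : rel T) (v : T) : {set T} := [set u | D u v].
Definition out_nbhd (D : rel T) (v : T) : {set T} := [set u | D v u].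

Definition niche_hypergraph (D : rel T) : {set {set T}} :=
  [set e : {set T} | (2 <= #|e|) &&
     [exists v, (e == in_nbhd D v) || (e == out_nbhd D v)]].

Definition add_isolated E (k : nat) : {set {set (T + 'I_k)%type}} :=
  [set [set (inl x : (T + 'I_k)%type) | x in e] | e : {set T} in E].

End Hyper.

Definition niche_realizable (T : finType) (E : {set {set T}}) (k : nat) : Prop :=
  exists D : rel (T + 'I_k)%type,
    @acyclic_digraph (T + 'I_k)%type D /\
    @niche_hypergraph (T + 'I_k)%type D = add_isolated E k.

Definition niche_number_is (T : finType) (E : {set {set T}}) (k : nat) : Prop :=
  niche_realizable E k /\ forall j, j < k -> ~ niche_realizable E j.

From HB Require Import structures.
From mathcomp Require Import all_boot.
Set Implicit Arguments. Unset Strict Implicit. Unset Printing Implicit Defensive.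

(* The witness has a hub c on s edges {c} ∪ B_k ("spokes", |B_k| = r - 1, pairwise
   disjoint) and two further disjoint edges {t_0, ..., t_(r-1)} and {b_0, ..., b_(r-1)}; so
   c has degree s and every other vertex degree 1.  Orient c -> t_i and b_j -> c, let every
   vertex of B_k point to t_k if k < r, and let b_j point to every vertex of B_(r+j).  Then
   N+(c) and N-(c) are the two disjoint edges, the k-th spoke is N-(t_k) or N+(b_(k-r)) --
   every spoke is reached because s <= 2r -- and all other neighbourhoods have at most one
   vertex.  The arcs only go up the levels b < c, B_k < t, so the digraph is acyclic and no
   isolated vertex has to be added.  A tree witnessing the hypertree property hangs the
   paths t_0 ... t_(r-1) and b_0 ... b_(r-1) and all vertices of the B_k from c. *)

Section ParentTree.
Variables (T : finType) (root : T) (parent : T -> T) (rank : T -> nat).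
Hypothesis rank_parent : forall x, x != root -> rank (parent x) < rank x.

Definition parent_rel : rel T := fun x y =>
  ((x != root) && (parent x == y)) || ((y != root) && (parent y == x)).

Lemma parent_rel_sym : symmetric parent_rel.
Proof. by move=> x y; rewrite /parent_rel orbC. Qed.

Lemma parent_rel_irr : irreflexive parent_rel.
Proof.
move=> x; rewrite /parent_rel orbb; apply/negP => /andP[x_root /eqP px].
by have := rank_parent x_root; rewrite px ltnn.
Qed.

Lemma connect_parent_within (e : {set T}) (m : T) :
    (forall x, x \in e -> x != m -> (x != root) && (parent x \in e)) ->
  {in e, forall x, connect (fun a b => [&& parent_rel a b, a \in e & b \in e]) x m}.
Proof.
move=> parent_in x; have [n] := ubnP (rank x); elim: n x => // n IHn x /ltnSE rank_x xe.
have [-> | xm] := eqVneq x m; first exact: connect0.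
have /andP[x_root pxe] := parent_in x xe xm.
apply: (connect_trans (y := parent x)).
  by apply: connect1; rewrite /parent_rel x_root eqxx xe pxe.
by apply: IHn pxe; apply: leq_trans (rank_parent x_root) rank_x.
Qed.

Lemma parent_rel_induced_connected (e : {set T}) (m : T) : m \in e ->
    (forall x, x \in e -> x != m -> (x != root) && (parent x \in e)) ->
  induced_connected parent_rel e.
Proof.
move=> me parent_in x y xe ye.
have within_sym : symmetric (fun a b => [&& parent_rel a b, a \in e & b \in e]).
  by move=> a b; rewrite parent_rel_sym [_ && (b \in e)]andbC.
apply: connect_trans (connect_parent_within parent_in xe) _.
by rewrite (sym_connect_sym within_sym) connect_parent_within.
Qed.

Lemma card_parent_arcs : #|[set p : T * T | parent_rel p.1 p.2]| = 2 * (#|T| - 1).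
Proof.
pose up := [set (x, parent x) | x in [set~ root]].
pose down := [set (parent x, x) | x in [set~ root]].
have -> : [set p : T * T | parent_rel p.1 p.2] = up :|: down.
  apply/setP => -[x y]; rewrite !inE /parent_rel /=; apply/idP/idP.
    by case/orP => /andP[x_root /eqP <-]; apply/orP; [left|right];
      apply: imset_f; rewrite !inE.
  by case/orP => /imsetP[z]; rewrite !inE => z_root [-> ->]; rewrite z_root eqxx ?orbT.
have disjoint_up_down : up :&: down = set0.
  apply/setP => -[x y]; rewrite !inE; apply/negP => /andP[].
  case/imsetP => z; rewrite !inE => z_root [-> ->].
  case/imsetP => w; rewrite !inE => w_root [zw pzw].
  move: (rank_parent z_root) (rank_parent w_root); rewrite pzw -zw => lt_wz lt_zw.
  by have := ltn_trans lt_wz lt_zw; rewrite ltnn.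
rewrite cardsU disjoint_up_down cards0 subn0 !card_imset; last 2 first.
- by move=> x y [].
- by move=> x y [].
by rewrite cardsC1 addnn -mul2n subn1.
Qed.

Lemma parent_rel_tree : is_tree parent_rel.
Proof.
split; first exact: parent_rel_sym.
split; first exact: parent_rel_irr.
split; last exact: card_parent_arcs.
move=> x y; have all_in : induced_connected parent_rel setT.
  by apply: (parent_rel_induced_connected (in_setT root)) => z _ ->; rewrite in_setT.
by apply: connect_sub (all_in x y (in_setT x) (in_setT y)) => a b /andP[ab _]; apply: connect1.
Qed.

End ParentTree.

Section Rank.
Variables (T : finType) (D : rel T) (f : T -> nat).
Hypothesis D_rank : forall x y, D x y -> f x < f y.

Lemma connect_rank_le x y : connect D x y -> f x <= f y.
Proof.
case/connectP => p; elim: p x => [x _ -> // | z p IHp x /= /andP[/D_rank xz zp] y_last].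
exact: leq_trans (ltnW xz) (IHp z zp y_last).
Qed.

Lemma acyclic_of_rank : acyclic_digraph D.
Proof. by move=> x y /D_rank xy; apply/negP => /connect_rank_le; rewrite leqNgt xy. Qed.

End Rank.

Section AddIsolated.
Variables (T : finType) (k : nat) (D : rel T).

Definition inl_rel : rel (T + 'I_k)%type := fun x y =>
  if (x, y) is (inl a, inl b) then D a b else false.

Let inl_inj : injective (@inl T 'I_k). Proof. by move=> a b []. Qed.

Lemma in_nbhd_inl v : in_nbhd inl_rel (inl v) = inl @: in_nbhd D v.
Proof.
apply/setP => -[a|i]; rewrite inE ?mem_imset ?inE //.
by apply/esym/imsetP => -[].
Qed.

Lemma out_nbhd_inl v : out_nbhd inl_rel (inl v) = inl @: out_nbhd D v.
Proof.
apply/setP => -[a|i]; rewrite inE ?mem_imset ?inE //.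
by apply/esym/imsetP => -[].
Qed.

Lemma in_nbhd_inr i : in_nbhd inl_rel (inr i) = set0.
Proof. by apply/setP => -[a|j]; rewrite !inE. Qed.

Lemma out_nbhd_inr i : out_nbhd inl_rel (inr i) = set0.
Proof. by apply/setP => -[a|j]; rewrite !inE. Qed.

Lemma niche_hypergraph_inl_rel :
  niche_hypergraph inl_rel = add_isolated (niche_hypergraph D) k.
Proof.
apply/setP => e; rewrite inE; apply/idP/imsetP.
  case/andP => e2 /existsP[[v|i]]; last first.
    by rewrite in_nbhd_inr out_nbhd_inr orbb => /eqP e0; rewrite e0 cards0 in e2.
  rewrite in_nbhd_inl out_nbhd_inl => /orP[]/eqP e_nbhd;
    [exists (in_nbhd D v) | exists (out_nbhd D v)] => //;
    rewrite inE -(card_imset _ inl_inj) -e_nbhd e2; apply/existsP; exists v;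
    by rewrite eqxx ?orbT.
case=> e0; rewrite inE => /andP[e0_2 /existsP[v e0_nbhd]] ->.
rewrite card_imset // e0_2; apply/existsP; exists (inl v).
by rewrite in_nbhd_inl out_nbhd_inl; case/orP: e0_nbhd => /eqP ->; rewrite eqxx ?orbT.
Qed.

End AddIsolated.

Lemma niche_number0_of_rank (T : finType) (D : rel T) (f : T -> nat) :
  (forall x y, D x y -> f x < f y) -> niche_number_is (niche_hypergraph D) 0.
Proof.
move=> D_rank; split=> //; exists (inl_rel D); split; last exact: niche_hypergraph_inl_rel.
apply: (acyclic_of_rank (f := fun x => if x is inl a then f a else 0)).
by move=> [a|?] [b|?] //= /D_rank.
Qed.

Section Construction.
Variables r s : nat.

Inductive vertex := Hub | Top of 'I_r | Bot of 'I_r | Leaf of 'I_s & 'I_r.-1.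

Definition vertex_code (x : vertex) : unit + 'I_r + 'I_r + 'I_s * 'I_r.-1 :=
  match x with
  | Hub => inl (inl (inl tt))
  | Top i => inl (inl (inr i))
  | Bot j => inl (inr j)
  | Leaf k m => inr (k, m)
  end.

Definition vertex_decode (c : unit + 'I_r + 'I_r + 'I_s * 'I_r.-1) : vertex :=
  match c with
  | inl (inl (inl _)) => Hub
  | inl (inl (inr i)) => Top i
  | inl (inr j) => Bot j
  | inr (k, m) => Leaf k m
  end.

Lemma vertex_codeK : cancel vertex_code vertex_decode. Proof. by case. Qed.

HB.instance Definition _ := Finite.copy vertex (can_type vertex_codeK).

Definition tops : {set vertex} := [set Top i | i : 'I_r].
Definition bots : {set vertex} := [set Bot j | j : 'I_r].
Definition spoke (k : 'I_s) : {set vertex} := Hub |: [set Leaf k m | m : 'I_r.-1].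
Definition edges : {set {set vertex}} := tops |: (bots |: [set spoke k | k : 'I_s]).

Definition arc (x y : vertex) : bool :=
  match x, y with
  | Hub, Top _ => true
  | Leaf k _, Top i => k == i :> nat
  | Bot _, Hub => true
  | Bot j, Leaf k _ => k == r + j :> nat
  | _, _ => false
  end.

Lemma mem_tops x : (x \in tops) = if x is Top _ then true else false.
Proof. by case: x => [|i|j|k m]; [| by rewrite imset_f | |]; apply/imsetP => -[]. Qed.

Lemma mem_bots x : (x \in bots) = if x is Bot _ then true else false.
Proof. by case: x => [|i|j|k m]; [| | by rewrite imset_f |]; apply/imsetP => -[]. Qed.

Lemma mem_spoke k x : (x \in spoke k) = if x is Leaf l _ then l == k else x == Hub.
Proof.
rewrite in_setU1; case: x => [|i|j|l m] //=; try by apply/imsetP => -[].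
by apply/imsetP/eqP => [[m' _ [-> _]] | ->] //; exists m.
Qed.

Lemma mem_edges e : (e \in edges) = [|| e == tops, e == bots | [exists k, e == spoke k]].
Proof.
rewrite !inE; congr [|| _, _ | _].
by apply/imsetP/existsP => -[k] => [_ -> | /eqP ->]; exists k.
Qed.

Hypothesis r_gt1 : 1 < r.
Hypothesis s_le2r : s <= 2 * r.

Lemma card_tops : #|tops| = r.
Proof. by rewrite card_imset ?card_ord // => i j []. Qed.

Lemma card_bots : #|bots| = r.
Proof. by rewrite card_imset ?card_ord // => i j []. Qed.

Lemma card_spoke k : #|spoke k| = r.
Proof.
rewrite cardsU1 card_imset ?card_ord; last by move=> m m' [].
have -> : Hub \notin [set Leaf k m | m : 'I_r.-1] by apply/imsetP => -[].
by rewrite add1n prednK // ltnW.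
Qed.

Lemma edges_uniform : uniform r edges.
Proof.
move=> e; rewrite mem_edges => /or3P[/eqP->|/eqP->|/existsP[k /eqP->]];
  by rewrite ?card_tops ?card_bots ?card_spoke.
Qed.

Lemma edges_hypergraph : is_hypergraph edges.
Proof.
split=> [e e' Ee Ee' ee'|e Ee]; last by rewrite (edges_uniform Ee).
by apply/eqP; rewrite eqEcard ee' (edges_uniform Ee) (edges_uniform Ee') leqnn.
Qed.

Lemma spoke_edge k : spoke k \in edges.
Proof. by rewrite !setU1r ?imset_f. Qed.

Lemma in_nbhd_Hub : in_nbhd arc Hub = bots.
Proof. by apply/setP => x; rewrite inE mem_bots; case: x. Qed.

Lemma out_nbhd_Hub : out_nbhd arc Hub = tops.
Proof. by apply/setP => x; rewrite inE mem_tops; case: x. Qed.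

Lemma in_nbhd_Top (i : 'I_r) (k : 'I_s) : k = i :> nat -> in_nbhd arc (Top i) = spoke k.
Proof. by move=> ki; apply/setP => x; rewrite inE mem_spoke; case: x => //= l m; rewrite -ki. Qed.

Lemma out_nbhd_Bot (j : 'I_r) (k : 'I_s) : k = r + j :> nat -> out_nbhd arc (Bot j) = spoke k.
Proof. by move=> kj; apply/setP => x; rewrite inE mem_spoke; case: x => //= l m; rewrite -kj. Qed.

Lemma in_nbhd_edge_or_small v : (in_nbhd arc v \in edges) || (#|in_nbhd arc v| <= 1).
Proof.
case: v => [|i|j|k m].
- by rewrite in_nbhd_Hub !inE eqxx orbT.
- case: (ltnP i s) => [i_lt_s|s_le_i].
    by rewrite (in_nbhd_Top (k := Ordinal i_lt_s)) ?spoke_edge.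
  have only_Hub x : arc x (Top i) -> x = Hub.
    by case: x => // l m /eqP li; have := ltn_ord l; rewrite li ltnNge s_le_i.
  by apply/orP; right; apply/card_le1_eqP => x y; rewrite !inE => /only_Hub -> /only_Hub ->.
- by apply/orP; right; apply/card_le1_eqP => x y; rewrite !inE; case: x.
- apply/orP; right; apply/card_le1_eqP => x y; rewrite !inE.
  case: x; case: y => // j j' /eqP kj /eqP kj'; congr Bot; apply: val_inj; apply/eqP.
  by rewrite -(eqn_add2l r) -kj -kj'.
Qed.

Lemma out_nbhd_edge_or_small v : (out_nbhd arc v \in edges) || (#|out_nbhd arc v| <= 1).
Proof.
case: v => [|i|j|k m].
- by rewrite out_nbhd_Hub !inE eqxx.
- by apply/orP; right; apply/card_le1_eqP => x y; rewrite !inE; case: x.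
- case: (ltnP (r + j) s) => [rj_lt_s|s_le_rj].
    by rewrite (out_nbhd_Bot (k := Ordinal rj_lt_s)) ?spoke_edge.
  have only_Hub x : arc (Bot j) x -> x = Hub.
    by case: x => // l m /eqP lj; have := ltn_ord l; rewrite lj ltnNge s_le_rj.
  by apply/orP; right; apply/card_le1_eqP => x y; rewrite !inE => /only_Hub -> /only_Hub ->.
- apply/orP; right; apply/card_le1_eqP => x y; rewrite !inE.
  by case: x; case: y => // i i' /eqP ki /eqP ki'; congr Top; apply: val_inj; rewrite /= -ki -ki'.
Qed.

Lemma edge_is_nbhd e : e \in edges ->
  [exists v, (e == in_nbhd arc v) || (e == out_nbhd arc v)].
Proof.
rewrite mem_edges => /or3P[/eqP->|/eqP->|/existsP[k /eqP->]].
- by apply/existsP; exists Hub; rewrite out_nbhd_Hub eqxx orbT.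
- by apply/existsP; exists Hub; rewrite in_nbhd_Hub eqxx.
apply/existsP; case: (ltnP k r) => [k_lt_r|r_le_k].
  by exists (Top (Ordinal k_lt_r)); rewrite (in_nbhd_Top (k := k)) ?eqxx.
have kr_lt_r : k - r < r by rewrite ltn_subLR // addnn -mul2n (leq_trans (ltn_ord k)).
by exists (Bot (Ordinal kr_lt_r)); rewrite (out_nbhd_Bot (k := k)) ?eqxx ?orbT //= subnKC.
Qed.

Lemma niche_hypergraph_arc : niche_hypergraph arc = edges.
Proof.
apply/setP => e; rewrite inE; apply/idP/idP => [/andP[e_gt1 /existsP[v]] | Ee].
  case/orP => /eqP e_nbhd.
    by have := in_nbhd_edge_or_small v; rewrite -e_nbhd leqNgt e_gt1 orbF.
  by have := out_nbhd_edge_or_small v; rewrite -e_nbhd leqNgt e_gt1 orbF.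
by rewrite (edges_uniform Ee) r_gt1 edge_is_nbhd.
Qed.

Lemma edges_meet_at_Hub e e' : e \in edges -> e' \in edges -> e != e' ->
  {in e :&: e', forall x, x = Hub}.
Proof.
rewrite !mem_edges => Ee Ee' ee' x; rewrite inE => /andP[].
case/or3P: Ee ee' => [/eqP->|/eqP->|/existsP[k /eqP->]];
case/or3P: Ee' => [/eqP->|/eqP->|/existsP[l /eqP->]];
  rewrite ?mem_tops ?mem_bots ?mem_spoke ?eqxx //; case: x => //=.
by move=> k' m kl /eqP -> /eqP lk; rewrite lk eqxx in kl.
Qed.

Lemma edges_linear : linear_hg edges.
Proof.
move=> e e' Ee Ee' ee'; apply/card_le1_eqP => x y.
by move=> /(edges_meet_at_Hub Ee Ee' ee') -> /(edges_meet_at_Hub Ee Ee' ee') ->.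
Qed.

Lemma spoke_inj : injective spoke.
Proof.
have m0 : 'I_r.-1 by exists 0; rewrite -ltnS prednK // ltnW.
move=> k l kl; have : Leaf k m0 \in spoke l by rewrite -kl mem_spoke.
by rewrite mem_spoke => /eqP.
Qed.

Lemma degree_Hub : degree edges Hub = s.
Proof.
rewrite /degree; have -> : [set e in edges | Hub \in e] = [set spoke k | k : 'I_s].
  apply/setP => e; rewrite inE; apply/andP/imsetP => [[] | [k _ ->]].
    rewrite mem_edges => /or3P[/eqP->|/eqP->|/existsP[k /eqP->]] //;
      by rewrite ?mem_tops ?mem_bots // => _; exists k.
  by rewrite spoke_edge mem_spoke.
by rewrite card_imset ?card_ord //; exact: spoke_inj.
Qed.

Lemma degree_le1 v : v != Hub -> degree edges v <= 1.
Proof.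
move=> v_Hub; apply/card_le1_eqP => e e' /setIdP[Ee ve] /setIdP[Ee' ve'].
have [// | ee'] := eqVneq e e'.
have v_eq : v = Hub by apply: (edges_meet_at_Hub Ee Ee' ee'); rewrite inE ve ve'.
by rewrite v_eq eqxx in v_Hub.
Qed.

Lemma max_degree_edges : 0 < s -> max_degree edges = s.
Proof.
move=> s_gt0; apply/eqP; rewrite eqn_leq -{2}degree_Hub leq_bigmax andbT.
apply/bigmax_leqP => v _; have [-> | v_Hub] := eqVneq v Hub; first by rewrite degree_Hub.
exact: leq_trans (degree_le1 v_Hub) s_gt0.
Qed.

Definition ord_prev (i : 'I_r) : 'I_r := Ordinal (leq_ltn_trans (leq_pred i) (ltn_ord i)).

Definition parent (x : vertex) : vertex :=
  match x with
  | Top i => if i == 0 :> nat then Hub else Top (ord_prev i)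
  | Bot j => if j == 0 :> nat then Hub else Bot (ord_prev j)
  | _ => Hub
  end.

Definition depth (x : vertex) : nat :=
  match x with Hub => 0 | Top i => i.+1 | Bot j => j.+1 | Leaf _ _ => 1 end.

Lemma depth_parent x : x != Hub -> depth (parent x) < depth x.
Proof. by case: x => //= i _; case: eqP => //= /eqP; rewrite ltnS ltn_predL lt0n. Qed.

Lemma edges_hypertree : hypertree edges.
Proof.
pose ord0 : 'I_r := Ordinal (ltnW r_gt1).
have val0 (i : 'I_r) : i = 0 :> nat -> i = ord0 by move=> i0; apply: val_inj.
exists (parent_rel Hub parent); split; first exact: parent_rel_tree depth_parent.
move=> e; rewrite mem_edges => /or3P[/eqP->|/eqP->|/existsP[k /eqP->]].
- apply: (parent_rel_induced_connected depth_parent (m := Top ord0)); first by rewrite mem_tops.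
  move=> x; rewrite mem_tops; case: x => //= i _.
  by case: (eqVneq (i : nat) 0) => [/val0 -> | _]; rewrite ?eqxx ?mem_tops.
- apply: (parent_rel_induced_connected depth_parent (m := Bot ord0)); first by rewrite mem_bots.
  move=> x; rewrite mem_bots; case: x => //= j _.
  by case: (eqVneq (j : nat) 0) => [/val0 -> | _]; rewrite ?eqxx ?mem_bots.
apply: (parent_rel_induced_connected depth_parent (m := Hub)); first by rewrite mem_spoke.
by move=> x; rewrite !mem_spoke; case: x.
Qed.

Definition level (x : vertex) : nat :=
  match x with Bot _ => 0 | Hub | Leaf _ _ => 1 | Top _ => 2 end.

Lemma arc_level x y : arc x y -> level x < level y.
Proof. by case: x; case: y. Qed.

End Construction.

Theorem theorem3 (r s : nat) :
  3 <= r -> 3 <= s <= 2 * r ->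
  exists (T : finType) (E : {set {set T}}),
    is_hypergraph E /\ uniform r E /\ linear_hg E /\ hypertree E /\
    max_degree E = s /\ niche_number_is E 0.
Proof.
move=> r_ge3 /andP[s_ge3 s_le2r].
have r_gt1 : 1 < r by apply: ltnW.
exists (vertex r s), (edges r s).
split; first exact: edges_hypergraph.
split; first exact: edges_uniform.
split; first exact: edges_linear.
split; first exact: edges_hypertree.
split; first by apply: (max_degree_edges r_gt1); apply: leq_trans _ s_ge3.
by rewrite -(niche_hypergraph_arc r_gt1 s_le2r); apply: niche_number0_of_rank (@arc_level r s).
Qed.
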